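(* Let $f:\mathbb{X}(N,k)\to\mathbb{R}$ be a monotone $k$-submodular function, let $\hat{\mathbf{x}}\in\mathcal{X}$, and let $\hat{\mathbf{S}}=(\hat S_1,\dots,\hat S_k)$ be an optimal solution of the defender's problem defining $\Phi_D(\hat{\mathbf{x}})$, so $\Phi_D(\hat{\mathbf{x}})=f(\hat{\mathbf{S}})$. For each $q$ fix an arbitrary ordering $\hat S_q=\{i_{q,1},\dots,i_{q,T_q}\}$ and for $1\le t\le T_q$ let $\hat{\mathbf{S}}_{q,(t)}=(\hat S_1,\dots,\hat S_{q-1},\{i_{q,1},\dots,i_{q,t-1}\},\emptyset,\dots,\emptyset)$ (the $q$-th component is empty when $t=1$). Then for every $\mathbf{x}\in\mathcal{X}$, $$\Phi_D(\mathbf{x})\;\ge\;\Phi_D(\hat{\mathbf{x}})-\sum_{q=1}^k\sum_{t=1}^{T_q}\rho_{q,i_{q,t}}(\hat{\mathbf{S}}_{q,(t)})\,x_{q,i_{q,t}},$$ and moreover the right-hand side of this inequality is at least $\Phi_D(\hat{\mathbf{x}})-\sum_{q=1}^k\sum_{i\in\hat S_q}\rho_{q,i}(\boldsymbol{\emptyset})\,x_{q,i}$ for every $\mathbf{x}\in\mathcal{X}$.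
   Context: Let $n,k$ be positive integers and $N=\{1,\dots,n\}$. $\mathbb{X}(N,k)$ denotes the set of $k$-tuples $\mathbf{S}=(S_1,\dots,S_k)$ of pairwise disjoint subsets of $N$; such a tuple is identified with $\mathbf{s}\in\{0,1\}^{kn}$ where $s_{q,i}=1$ iff $i\in S_q$. For $\mathbf{X},\mathbf{Y}\in\mathbb{X}(N,k)$ let $\mathbf{X}\sqcap\mathbf{Y}=(X_1\cap Y_1,\dots,X_k\cap Y_k)$ and $\mathbf{X}\sqcup\mathbf{Y}$ be the tuple whose $i$-th component is $(X_i\cup Y_i)\setminus\bigcup_{q\ne i}(X_q\cup Y_q)$. A function $f:\mathbb{X}(N,k)\to\mathbb{R}$ is $k$-submodular if $f(\mathbf{X})+f(\mathbf{Y})\ge f(\mathbf{X}\sqcap\mathbf{Y})+f(\mathbf{X}\sqcup\mathbf{Y})$ for all $\mathbf{X},\mathbf{Y}$, and monotone if $f(\mathbf{X})\le f(\mathbf{Y})$ whenever $X_q\subseteq Y_q$ for all $q$. $\boldsymbol{\emptyset}=(\emptyset,\dots,\emptyset)$. For $\mathbf{X}\in\mathbb{X}(N,k)$, $q\in\{1,\dots,k\}$ and $i\in N\setminus\bigcup_r X_r$, the marginal gain is $\rho_{q,i}(\mathbf{X})=f(X_1,\dots,X_{q-1},X_q\cup\{i\},X_{q+1},\dots,X_k)-f(\mathbf{X})$. Given nonnegative integer budgets $A_1,\dots,A_k$ and $D_1,\dots,D_k$, the attacker's feasible set is $\mathcal{X}=\{\mathbf{x}\in\{0,1\}^{kn}:\sum_{i=1}^n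 x_{q,i}\le A_q\ \forall q,\ \sum_{q=1}^k x_{q,i}\le 1\ \forall i\in N\}$, and $\Phi_D(\mathbf{x})=\max\{f(\mathbf{S}):\mathbf{S}\in\mathbb{X}(N,k),\ s_{q,i}\le 1-x_{q,i}\ \forall q,i,\ \sum_{i=1}^n s_{q,i}\le D_q\ \forall q\}$. *)

From mathcomp Require Import all_boot all_order all_algebra.
Set Implicit Arguments. Unset Strict Implicit. Unset Printing Implicit Defensive.
Import Order.TTheory GRing.Theory Num.Theory.
Local Open Scope ring_scope.

Definition kset (n k : nat) := {ffun 'I_k -> {set 'I_n}}.

Section Defs.
Variables (n k : nat) (R : realFieldType).

Definition disj (X : kset n k) : bool :=
  [forall q, forall r, (q != r) ==> [disjoint X q & X r]].

Definition kmeet (X Y : kset n k) : kset n k := [ffun q => X q :&: Y q].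

Definition kjoin (X Y : kset n k) : kset n k :=
  [ffun q => (X q :|: Y q) :\: \bigcup_(r | r != q) (X r :|: Y r)].

Definition ksub (X Y : kset n k) : bool := [forall q, X q \subset Y q].

Definition k_submodular (f : kset n k -> R) : Prop :=
  forall X Y, disj X -> disj Y -> f (kmeet X Y) + f (kjoin X Y) <= f X + f Y.

Definition k_monotone (f : kset n k -> R) : Prop :=
  forall X Y, disj X -> disj Y -> ksub X Y -> f X <= f Y.

Definition kempty : kset n k := [ffun _ => set0].

Definition kadd (X : kset n k) (q : 'I_k) (i : 'I_n) : kset n k :=
  [ffun r => if r == q then i |: X r else X r].

Definition rho (f : kset n k -> R) (q : 'I_k) (i : 'I_n) (X : kset n k) : R :=
  f (kadd X q i) - f X.

(* x in the attacker's feasible set: x_q = {i | x_{q,i} = 1} *)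
Definition attacker_feasible (A : 'I_k -> nat) (x : kset n k) : bool :=
  disj x && [forall q, #|x q| <= A q]%N.

Definition defender_feasible (D : 'I_k -> nat) (x S : kset n k) : bool :=
  disj S && [forall q, [disjoint S q & x q] && (#|S q| <= D q)%N].

(* Phi_D(x) = max of f over defender-feasible S (kempty is always feasible) *)
Definition PhiD (f : kset n k -> R) (D : 'I_k -> nat) (x : kset n k) : R :=
  \big[Num.max/f kempty]_(S : kset n k | defender_feasible D x S) f S.

Definition xv (x : kset n k) (q : 'I_k) (i : 'I_n) : R := (i \in x q)%:R.

(* Given the ordering s of S_q and i = i_{q,t} in s, this is S_{q,(t)}:
   components r<q are S_r, component q is {i_{q,1},..,i_{q,t-1}}, others empty. *)
Definition Sprefix (S : kset n k) (q : 'I_k) (s : seq 'I_n) (i : 'I_n) : kset n k :=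
  [ffun r : 'I_k => if (r < q)%N then S r
                    else if r == q then [set y in take (index i s) s] else set0].

End Defs.

(** With the attacked elements removed, the defender's solution [S] stays
    feasible against [x], so [Phi_D(x) >= f(S \ x)] while [Phi_D(xhat) = f S].
    Build [S] and [S \ x] side by side, element by element in the given order.
    Adding an attacked element to [S] only widens the gap [f S - f (S \ x)] by
    exactly [rho_{q,i}(S_{q,(t)})]; adding an unattacked element to both does
    not widen it, by diminishing returns, which k-submodularity gives by
    meeting and joining [X + (q,i)] with [Y] for [X] below [Y].  Diminishing
    returns against the empty tuple gives the second bound. *)
From mathcomp Require Import all_boot all_order all_algebra.
From mathcomp Require Import lra.
Set Implicit Arguments. Unset Strict Implicit. Unset Printing Implicit Defensive.
Import Order.TTheory GRing.Theory Num.Theory.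
Local Open Scope ring_scope.

Section KSets.
Variables n k : nat.
Implicit Types (X Y B : kset n k) (q r : 'I_k) (i : 'I_n) (T : {set 'I_n}).

Lemma disjP X : reflect (forall q r i, i \in X q -> i \in X r -> q = r) (disj X).
Proof.
apply: (iffP forallP) => [dX q r i iq ir | dX q].
- apply/eqP/negPn/negP => /(implyP (forallP (dX q) r)) /disjointFr /(_ iq).
  by rewrite ir.
- apply/forallP => r; apply/implyP => neq_qr; apply/pred0P => i /=.
  by apply/negbTE/andP => -[/dX iq /iq eq_qr]; rewrite eq_qr eqxx in neq_qr.
Qed.

Lemma ksubP X Y : reflect (forall q, {subset X q <= Y q}) (ksub X Y).
Proof. by apply: (iffP forallP) => sXY q; apply/subsetP. Qed.

Lemma disj_ksub X Y : ksub X Y -> disj Y -> disj X.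
Proof. by move=> /ksubP sXY /disjP dY; apply/disjP => q r i /sXY iq /sXY; apply: dY. Qed.

Lemma kempty_ksub X : ksub (kempty n k) X.
Proof. by apply/ksubP => q i; rewrite ffunE inE. Qed.

Lemma disj_kadd B q i : disj B -> (forall r, i \notin B r) -> disj (kadd B q i).
Proof.
move=> /disjP dB iNB; apply/disjP => r s j.
have kaddP r' j' : j' \in kadd B q i r' -> (r' = q /\ j' = i) \/ j' \in B r'.
  by rewrite ffunE; case: eqP => [->|_]; rewrite ?in_setU1; [case/predU1P; auto | auto].
case/kaddP => [[-> ->]|jr]; case/kaddP => [[-> eq_ji]|js] //.
- by rewrite (negbTE (iNB s)) in js.
- by move: jr; rewrite eq_ji (negbTE (iNB r)).
- exact: dB jr js.
Qed.

Lemma ksub_trans Y X Z : ksub X Y -> ksub Y Z -> ksub X Z.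
Proof. by move=> /ksubP sXY /ksubP sYZ; apply/ksubP => q i /sXY /sYZ. Qed.

Lemma ksub_kadd B q i : ksub B (kadd B q i).
Proof. by apply/ksubP => r j; rewrite ffunE; case: eqP => // _ jB; rewrite in_setU1 jB orbT. Qed.

Lemma ksub_kadd2 X Y q i : ksub X Y -> ksub (kadd X q i) (kadd Y q i).
Proof.
move=> /ksubP sXY; apply/ksubP => r j; rewrite !ffunE.
case: eqP => _; last exact: sXY.
by rewrite !in_setU1 => /predU1P[->|/sXY ->]; rewrite ?eqxx ?orbT.
Qed.

Lemma kjoin_disj X Y :
  disj [ffun r => X r :|: Y r] -> kjoin X Y = [ffun r => X r :|: Y r].
Proof.
move=> /disjP dXY; apply/ffunP => r; rewrite !ffunE; apply/setP => i.
rewrite in_setD andbC; case iXY: (i \in _) => //=.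
apply/bigcupP => -[s neq_sr iXYs].
by have eq_sr := dXY s r i; rewrite !ffunE in eq_sr; rewrite eq_sr ?eqxx in neq_sr.
Qed.

Definition kput B q T : kset n k :=
  [ffun r => if r == q then B q :|: T else B r].

Lemma kput_set0 B q : kput B q set0 = B.
Proof. by apply/ffunP => r; rewrite !ffunE; case: eqP => [->|]; rewrite ?setU0. Qed.

Lemma kputU1 B q i T : kput B q (i |: T) = kput (kadd B q i) q T.
Proof. by apply/ffunP => r; rewrite !ffunE; case: eqP => // _; rewrite eqxx setUA [i |: _]setUC. Qed.

Definition kdiff X Y : kset n k := [ffun r => X r :\: Y r].

Definition ktrunc X (m : nat) : kset n k :=
  [ffun r : 'I_k => if (r < m)%N then X r else set0].

Lemma kdiff_ksub X Y : ksub (kdiff X Y) X.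
Proof. by apply/ksubP => q i; rewrite ffunE inE => /andP[]. Qed.

Lemma ktrunc_ksub X m : ksub (ktrunc X m) X.
Proof. by apply/ksubP => q i; rewrite ffunE; case: ifP; rewrite ?inE. Qed.

Lemma ksub_ktrunc X Y m : ksub X Y -> ksub (ktrunc X m) (ktrunc Y m).
Proof. by move=> /ksubP sXY; apply/ksubP => q i; rewrite !ffunE; case: ifP => // _ /sXY. Qed.

Lemma ktrunc0 X : ktrunc X 0 = kempty n k.
Proof. by apply/ffunP => r; rewrite !ffunE. Qed.

Lemma ktrunc_all X : ktrunc X k = X.
Proof. by apply/ffunP => r; rewrite ffunE ltn_ord. Qed.

Lemma ktruncS X q : ktrunc X q.+1 = kput (ktrunc X q) q (X q).
Proof.
apply/ffunP => r; rewrite !ffunE ltnS leq_eqVlt -val_eqE /=.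
by case: (ltngtP r q) => // /val_inj ->; rewrite ltnn set0U.
Qed.

Lemma SprefixE X q s i :
  Sprefix X q s i = kput (ktrunc X q) q [set y in take (index i s) s].
Proof.
apply/ffunP => r; rewrite !ffunE -val_eqE /=.
by case: (ltngtP r q) => // _; rewrite ltnn set0U.
Qed.

Lemma Sprefix_ksub X q s i : {subset s <= X q} -> ksub (Sprefix X q s i) X.
Proof.
move=> sX; apply/ksubP => r j; rewrite ffunE.
case: ifP => // _; case: eqP => [->|_]; rewrite inE // => /mem_take; exact: sX.
Qed.

End KSets.

Section KSubmodular.
Variables (n k : nat) (R : realFieldType) (f : kset n k -> R).
Hypothesis f_ksubmod : k_submodular f.
Implicit Types (X Y B : kset n k) (q r : 'I_k) (i : 'I_n).

Lemma rho_antimono X Y q i :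
  disj Y -> ksub X Y -> (forall r, i \notin Y r) -> rho f q i Y <= rho f q i X.
Proof.
move=> dY sXY iNY.
have sXYr r : X r \subset Y r by apply: (forallP sXY).
have iNX r : i \notin X r by apply: contra (iNY r); apply/subsetP.
have join_eq : [ffun r => kadd X q i r :|: Y r] = kadd Y q i.
  by apply/ffunP => r; rewrite !ffunE; case: eqP => _; rewrite -?setUA (setUidPr (sXYr r)).
have meet_eq : kmeet (kadd X q i) Y = X.
  apply/ffunP => r; rewrite !ffunE; case: eqP => [->|_]; last exact/setIidPl.
  rewrite setIUl (setIidPl (sXYr q)) -[RHS]set0U; congr (_ :|: _).
  by apply/setP => j; rewrite !inE; case: eqP => // ->; rewrite (negbTE (iNY q)).
have := f_ksubmod (disj_kadd q (disj_ksub sXY dY) iNX) dY.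
rewrite kjoin_disj join_eq ?meet_eq; last exact: disj_kadd.
by rewrite /rho; lra.
Qed.

Lemma telescope_kput q (C : {set 'I_n}) (s : seq 'I_n) B B' :
  uniq s -> disj B -> ksub B' B -> (forall i r, i \in s -> i \notin B r) ->
  f (kput B q [set i in s]) - f (kput B' q [set i in s | i \notin C])
  <= f B - f B' + \sum_(i <- s) rho f q i (kput B q [set y in take (index i s) s]) * (i \in C)%:R.
Proof.
have set_in_nil : [set i in [::]] = set0 :> {set 'I_n} by apply/setP => y; rewrite !inE.
have set_in_cons a t : [set i in a :: t] = a |: [set i in t] :> {set 'I_n}.
  by apply/setP => y; rewrite !inE.
elim: s B B' => [|a s IH] B B'.
  by move=> *; rewrite big_nil addr0 set_in_nil !kput_set0.
rewrite cons_uniq => /andP[aNs uniq_s] dB sB'B sNB.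
have aNB r : a \notin B r by apply: sNB; rewrite mem_head.
have dBa := disj_kadd q dB aNB.
have sNBa i r : i \in s -> i \notin kadd B q a r.
  move=> i_s; rewrite ffunE; case: eqP => _; last by apply: sNB; rewrite inE i_s orbT.
  rewrite in_setU1 negb_or sNB ?inE ?i_s ?orbT // andbT.
  by apply: contraNneq aNs => <-.
have head_eq : kput B q [set y in take (index a (a :: s)) (a :: s)] = B.
  by rewrite /= eqxx take0 set_in_nil kput_set0.
have tail_eq :
    \sum_(i <- s) rho f q i (kput B q [set y in take (index i (a :: s)) (a :: s)]) * (i \in C)%:R
    = \sum_(i <- s) rho f q i (kput (kadd B q a) q [set y in take (index i s) s]) * (i \in C)%:R.
  rewrite big_seq [RHS]big_seq; apply: eq_bigr => i i_s.
  have /negbTE a_neq_i : a != i by apply: contraNneq aNs => ->.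
  by rewrite /= a_neq_i set_in_cons kputU1.
rewrite set_in_cons kputU1 big_cons head_eq tail_eq.
have filter_cons : [set i in a :: s | i \notin C]
    = if a \in C then [set i in s | i \notin C] else a |: [set i in s | i \notin C].
  by apply/setP => y; case: ifP => aC; rewrite !inE; case: eqVneq => [->|]; rewrite ?aC ?andbF.
rewrite filter_cons; case: ifP => aC.
- have := IH (kadd B q a) B' uniq_s dBa (ksub_trans sB'B (ksub_kadd B q a)) sNBa.
  by rewrite mulr1 [rho f q a B]/rho; lra.
- have := IH (kadd B q a) (kadd B' q a) uniq_s dBa (ksub_kadd2 q a sB'B) sNBa.
  have := rho_antimono q dB sB'B aNB; rewrite /rho => rho_le.
  by rewrite kputU1 mulr0; lra.
Qed.

Variables (S x : kset n k) (ord : 'I_k -> seq 'I_n).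
Hypotheses (dS : disj S) (ord_uniq : forall q, uniq (ord q))
  (ord_set : forall q, [set i in ord q] = S q).

Lemma ord_notin_ktrunc q i r : i \in ord q -> i \notin ktrunc S q r.
Proof.
move=> i_q; rewrite ffunE; case: ltnP => [lt_rq|_]; last by rewrite inE.
apply/negP => i_r; have eq_rq := disjP _ dS r q i i_r.
by rewrite -ord_set inE in eq_rq; rewrite (eq_rq i_q) ltnn in lt_rq.
Qed.

Lemma rho_Sprefix_le_kempty q i :
  i \in ord q -> rho f q i (Sprefix S q (ord q) i) <= rho f q i (kempty n k).
Proof.
move=> i_q; have sS : {subset ord q <= S q} by move=> j; rewrite -ord_set inE.
apply: rho_antimono (kempty_ksub _) _; first exact: disj_ksub (Sprefix_ksub i sS) dS.
move=> r; rewrite SprefixE ffunE; case: eqP => _; last exact: ord_notin_ktrunc.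
by rewrite in_setU (negbTE (ord_notin_ktrunc _ i_q)) inE; apply/negP => /index_ltn; rewrite ltnn.
Qed.

Lemma telescope_ktrunc m : (m <= k)%N ->
  f (ktrunc S m) - f (ktrunc (kdiff S x) m)
  <= \sum_(q < k | (q < m)%N) \sum_(i <- ord q) rho f q i (Sprefix S q (ord q) i) * xv R x q i.
Proof.
elim: m => [_|m IH lt_mk]; first by rewrite !ktrunc0 subrr big_pred0.
pose q := Ordinal lt_mk.
rewrite (bigD1 q) //= (eq_bigl (fun r : 'I_k => (r < m)%N)); last first.
  by move=> r; rewrite ltnS leq_eqVlt -val_eqE /=; case: ltngtP.
have diff_q : kdiff S x q = [set i in ord q | i \notin x q].
  by rewrite ffunE -ord_set; apply/setP => y; rewrite !inE andbC.
have dT : disj (ktrunc S q) by apply: disj_ksub (ktrunc_ksub _ _) dS.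
have sT : ksub (ktrunc (kdiff S x) q) (ktrunc S q) by apply/ksub_ktrunc/kdiff_ksub.
have := telescope_kput q (x q) (ord_uniq q) dT sT (fun i r i_q => ord_notin_ktrunc r i_q).
rewrite ord_set -diff_q => step.
rewrite (ktruncS S q) (ktruncS (kdiff S x) q) addrC; apply: le_trans step _.
apply: lerD; first exact: IH (ltnW lt_mk).
by under [X in _ <= X]eq_bigr do rewrite SprefixE.
Qed.

Lemma telescope_kdiff :
  f S - f (kdiff S x)
  <= \sum_(q < k) \sum_(i <- ord q) rho f q i (Sprefix S q (ord q) i) * xv R x q i.
Proof.
have := telescope_ktrunc (leqnn k); rewrite !ktrunc_all.
by under eq_bigl do rewrite ltn_ord.
Qed.

End KSubmodular.

Section DefenderValue.
Variables (n k : nat) (R : realFieldType) (f : kset n k -> R) (D : 'I_k -> nat).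
Implicit Types (x S : kset n k).

Lemma defender_feasible_kempty x : defender_feasible D x (kempty n k).
Proof.
apply/andP; split; first by apply/disjP => q r i; rewrite ffunE inE.
by apply/forallP => q; rewrite ffunE cards0 andbT; apply/pred0P => i; rewrite /= inE.
Qed.

Lemma defender_feasible_kdiff y x S :
  defender_feasible D y S -> defender_feasible D x (kdiff S x).
Proof.
case/andP => dS /forallP feasS; apply/andP; split; first exact: disj_ksub (kdiff_ksub _ _) dS.
apply/forallP => q; rewrite ffunE; apply/andP; split.
  by apply/pred0P => i; rewrite /= !inE; case: (i \in x q); rewrite ?andbF.
by apply: leq_trans (subset_leq_card (subsetDl _ _)) _; case/andP: (feasS q).
Qed.

Lemma PhiD_ge x S : defender_feasible D x S -> f S <= PhiD f D x.
Proof. exact: le_bigmax_cond. Qed.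

Lemma PhiD_le_opt x S :
  (forall S', defender_feasible D x S' -> f S' <= f S) -> PhiD f D x <= f S.
Proof. by move=> optS; apply: bigmax_le => //; apply/optS/defender_feasible_kempty. Qed.

End DefenderValue.

Theorem theorem2 (R : realFieldType) (n k : nat) (hn : (0 < n)%N) (hk : (0 < k)%N)
  (f : kset n k -> R) (A D : 'I_k -> nat)
  (hmono : k_monotone f) (hsub : k_submodular f)
  (xhat Shat : kset n k) (hxhat : attacker_feasible A xhat)
  (hSfeas : defender_feasible D xhat Shat)
  (hSopt : forall S, defender_feasible D xhat S -> f S <= f Shat)
  (ord : 'I_k -> seq 'I_n)
  (hord_uniq : forall q, uniq (ord q))
  (hord_set : forall q, [set i in ord q] = Shat q) :
  forall x : kset n k, attacker_feasible A x ->
    PhiD f D xhat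
      - \sum_(q < k) \sum_(i <- ord q)
          rho f q i (Sprefix Shat q (ord q) i) * xv R x q i
    <= PhiD f D x
  /\
    PhiD f D xhat - \sum_(q < k) \sum_(i in Shat q) rho f q i (kempty n k) * xv R x q i
    <= PhiD f D xhat
      - \sum_(q < k) \sum_(i <- ord q)
          rho f q i (Sprefix Shat q (ord q) i) * xv R x q i.
Proof.
move=> x _; have dShat : disj Shat by case/andP: hSfeas.
split.
- have := PhiD_le_opt hSopt.
  have := PhiD_ge f (defender_feasible_kdiff x hSfeas).
  have := telescope_kdiff hsub x dShat hord_uniq hord_set.
  lra.
- rewrite lerD2l lerN2; apply: ler_sum => q _.
  rewrite [X in _ <= X](eq_bigl (mem (ord q))) => [|i]; last by rewrite -hord_set inE.
  rewrite -big_uniq // !big_seq; apply: ler_sum => i i_q.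
  by apply: ler_wpM2r; [exact: ler0n | exact: rho_Sprefix_le_kempty].
Qed.
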